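(* Let $G$ be a connected graph with $V(G)=\{v_1,\dots,v_n\}$ and let $k_1,\dots,k_n$ be positive integers. If $S$ is a gp-set of $G$ that induces a complete subgraph of $G_{\rm SR}$, and $\min\{k_i:\ v_i\in S\}\ge \max\{k_i:\ v_i\notin S\}$, then $$\mathrm{gp}(G[K_{k_1},\dots,K_{k_n}])=\sum_{i:\,v_i\in S}k_i=\omega\big((G[K_{k_1},\dots,K_{k_n}])_{\rm SR}\big).$$
   Context: All graphs are finite and simple. For a graph $G$ with $V(G)=\{v_1,\dots,v_n\}$ and pairwise disjoint graphs $H_1,\dots,H_n$, the generalized lexicographic product $G[H_1,\dots,H_n]$ has vertex set $\bigcup_{i}\{(v_i,h): h\in V(H_i)\}$; $(v_i,h)$ and $(v_j,h')$ are adjacent iff either $v_iv_j\in E(G)$ (for arbitrary $h\in V(H_i)$, $h'\in V(H_j)$), or $i=j$ and $hh'\in E(H_i)$. That is, each $v_i$ is replaced by $H_i$ and each edge $v_iv_j$ by all edges between $H_i$ and $H_j$. For a connected graph $G$, a set $S\subseteq V(G)$ is a general position set if no three pairwise distinct vertices of $S$ lie on a common geodesic (shortest path); $\mathrm{gp}(G)$ is the maximum cardinality of a general position set, and a gp-set is a general position set of cardinality $\mathrm{gp}(G)$. A vertex $u$ is maximally distant from $v$ if every neighbor $w$ of $u$ satisfies $d_G(v,w)\le d_G(u,v)$; $u,v$ are mutually maximally distant (MMD) if each is maximally distant from the other. The strong resolving graph $G_{\rm SR}$ has vertex set $V(G)$, distinct vertices adjacent iff MMD in $G$. $\omega$ is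 the clique number. *)

From mathcomp Require Import all_boot.
Set Implicit Arguments. Unset Strict Implicit. Unset Printing Implicit Defensive.

Section Graphs.
Variable T : finType.
Variable e : rel T.

Definition walkb (x y : T) (n : nat) : bool :=
  [exists p : n.-tuple T, path e x p && (last x p == y)].

(* distance: least n < #|T| with a walk of length n from x to y
   (equals #|T| if there is none; irrelevant for connected graphs) *)
Definition dist (x y : T) : nat := find (walkb x y) (iota 0 #|T|).

(* u, v, w lie on a common geodesic: some path x :: p whose length
   equals the distance between its endpoints contains u, v and w.
   (A geodesic has length dist <= #|T|, so bounding m is no restriction.) *)
Definition on_common_geodesic (u v w : T) : bool :=
  [exists x : T, exists m : 'I_#|T|.+1, exists p : m.-tuple T,
     [&& path e x p, (m == dist x (last x p) :> nat),
         u \in x :: p, v \in x :: p & w \in x :: p]].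

Definition gen_pos (S : {set T}) : bool :=
  [forall u in S, forall v in S, forall w in S,
     [&& u != v, v != w & u != w] ==> ~~ on_common_geodesic u v w].

Definition gp : nat := \max_(S : {set T} | gen_pos S) #|S|.

Definition gp_set (S : {set T}) : bool := gen_pos S && (#|S| == gp).

Definition maximally_distant (u v : T) : bool :=
  [forall w, e u w ==> (dist v w <= dist u v)].

Definition MMD (u v : T) : bool := maximally_distant u v && maximally_distant v u.

Definition SR : rel T := fun u v => (u != v) && MMD u v.

End Graphs.

Definition clique (T : finType) (r : rel T) (S : {set T}) : bool :=
  [forall x in S, forall y in S, (x != y) ==> r x y].

Definition omega (T : finType) (r : rel T) : nat :=
  \max_(S : {set T} | clique r S) #|S|.

Definition simple_graph (T : finType) (e : rel T) : Prop :=
  symmetric e /\ irreflexive e.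

Definition connected_graph (T : finType) (e : rel T) : Prop :=
  forall x y : T, connect e x y.

(* generalized lexicographic product G[K_{k v} : v in T]:
   vertex (v, h) with h : 'I_(k v) a vertex of the complete graph K_{k v} *)
Definition lexK (T : finType) (e : rel T) (k : T -> nat) : rel {v : T & 'I_(k v)} :=
  fun a b => e (tag a) (tag b) || ((tag a == tag b) && (a != b)).
Arguments lexK {T} e k.

(* An interior vertex of a geodesic is never maximally distant from an earlier
   vertex of it, so every clique of G_SR is in general position:
   omega(G_SR) <= gp(G) for any connected graph G.  In H = G[K_k1, ..., K_kn]
   two vertices of one fibre are mutually maximally distant, and vertices of
   different fibres are at the same distance as their projections, so the
   fibres over S form a clique of H_SR with sum_(i in S) k_i vertices.
   Conversely a geodesic of G through three vertices lifts to a geodesic of H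
   through arbitrarily chosen vertices of their fibres, so a general position
   set of H meets at most gp(G) = |S| fibres; since the fibres over S are the
   largest ones, it has at most sum_(i in S) k_i vertices. *)

From mathcomp Require Import all_boot zify.
Set Implicit Arguments. Unset Strict Implicit. Unset Printing Implicit Defensive.

Section Walks.
Variables (T : finType) (e : rel T).

(* Walks are encoded as functions [nat -> T], so that concatenation and
   sub-walks are plain index arithmetic; [walkbP] relates them to [walkb]. *)
Definition is_walk (f : nat -> T) (n : nat) : Prop :=
  forall i, i < n -> e (f i) (f i.+1).

Definition fwalk (a b : T) (n : nat) : Prop :=
  exists f, [/\ f 0 = a, f n = b & is_walk f n].

Lemma fwalk0 a : fwalk a a 0.
Proof. by exists (fun _ => a); split. Qed.

Lemma fwalk1 a b : e a b -> fwalk a b 1.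
Proof. by move=> ab; exists (fun i => if i is 0 then a else b); split=> // -[]. Qed.

Lemma fwalk_cat a b c m n : fwalk a b m -> fwalk b c n -> fwalk a c (m + n).
Proof.
move=> [f [f0 fm wf]] [g [g0 gn wg]].
exists (fun i => if i <= m then f i else g (i - m)); split.
- by rewrite leq0n.
- case: ifP => [le_mn_m|_]; last by rewrite addKn.
  have n0 : n = 0 by lia.
  by rewrite n0 addn0 fm -gn n0 g0.
- move=> i; case: (ltngtP i m) => [lt_im|lt_mi|->] lt_i.
  + exact: wf.
  + have -> : i.+1 - m = (i - m).+1 by lia.
    apply: wg; lia.
  + rewrite fm -g0 subSnn; apply: wg; lia.
Qed.

Lemma fwalk_sub f n i j : is_walk f n -> i <= j <= n -> fwalk (f i) (f j) (j - i).
Proof.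
move=> wf /andP [le_ij le_jn]; exists (fun t => f (i + t)); split.
- by rewrite addn0.
- by rewrite subnKC.
- move=> t lt_t; rewrite addnS; apply: wf; lia.
Qed.

Lemma fwalk_connect a b n : fwalk a b n -> connect e a b.
Proof.
move=> [f [<- <- wf]]; elim: n wf => [|n IHn] wf; first exact: connect0.
apply: connect_trans (IHn _) (connect1 (wf n _)) => // i lt_in; apply: wf; lia.
Qed.

Lemma walkbP a b n : walkb e a b n <-> fwalk a b n.
Proof.
split.
- move=> /existsP [p /andP [ap /eqP <-]].
  exists (nth a (a :: p)); split => //.
  + by rewrite (last_nth a) size_tuple.
  + by move=> i lt_in; apply: (pathP a ap); rewrite size_tuple.
- move=> [f [f0 fn wf]]; apply/existsP.
  exists (@Tuple n T (mkseq (fun i => f i.+1) n) (introT eqP (size_mkseq _ _))) => /=.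
  apply/andP; split.
  + apply/(pathP a) => i; rewrite size_mkseq => lt_in; rewrite nth_mkseq //.
    case: i lt_in => [|i] lt_in /=; first by rewrite -f0; apply: wf.
    rewrite nth_mkseq; [apply: wf | ]; lia.
  + case: n fn wf => [|n] fn wf; first by rewrite /= -f0 fn eqxx.
    by rewrite -(nth_last a) size_mkseq (nth_mkseq a _ (ltnSn n)) fn.
Qed.

Lemma fwalk_rev a b n : symmetric e -> fwalk a b n -> fwalk b a n.
Proof.
move=> esym [f [f0 fn wf]]; exists (fun t => f (n - t)); split.
- by rewrite subn0.
- by rewrite subnn.
- move=> t lt_tn; rewrite esym.
  have -> : n - t = (n - t.+1).+1 by lia.
  apply: wf; lia.
Qed.

Lemma dist_le a b n : fwalk a b n -> dist e a b <= n.
Proof.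
move=> /walkbP ab_n; have [lt_nT|le_Tn] := ltnP n #|T|.
  by rewrite leqNgt; apply/negP => /(before_find 0); rewrite nth_iota // ab_n.
by apply: leq_trans le_Tn; rewrite -[X in _ <= X](size_iota 0) find_size.
Qed.

Lemma dist_xx a : dist e a a = 0.
Proof. by apply/eqP; rewrite -leqn0 dist_le //; apply: fwalk0. Qed.

Lemma dist_edge a b : e a b -> dist e a b <= 1.
Proof. by move/fwalk1/dist_le. Qed.

Section Connected.
Hypothesis econn : connected_graph e.

Lemma dist_fwalk a b : fwalk a b (dist e a b).
Proof.
have /connectP [p ap ->] := econn a b.
have [q aq uq _] := shortenP ap.
have has_walk : has (walkb e a (last a q)) (iota 0 #|T|).
  apply/hasP; exists (size q).
    by rewrite mem_iota /=; have := max_card (mem (a :: q)); rewrite (card_uniqP uq).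
  by apply/existsP; exists (in_tuple q); rewrite aq eqxx.
apply/walkbP; have := nth_find 0 has_walk.
by rewrite nth_iota //; move: has_walk; rewrite has_find size_iota.
Qed.

Lemma dist_gt0 a b : (0 < dist e a b) = (a != b).
Proof.
apply/idP/idP => [|ab]; first by apply: contraTneq => ->; rewrite dist_xx.
rewrite lt0n; apply: contra ab => /eqP d0.
by move: (dist_fwalk a b); rewrite d0 => -[f [<- <- _]].
Qed.

Hypothesis esym : symmetric e.

Lemma dist_sym a b : dist e a b = dist e b a.
Proof.
by apply/eqP; rewrite eqn_leq; apply/andP; split; apply/dist_le/fwalk_rev/dist_fwalk.
Qed.

Lemma dist_geodesic f m i j : is_walk f m -> dist e (f 0) (f m) = m ->
  i <= j <= m -> dist e (f i) (f j) = j - i.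
Proof.
move=> wf geo ijm; apply/eqP; rewrite eqn_leq dist_le /=; last exact: (fwalk_sub wf).
rewrite leqNgt; apply/negP => shortcut.
have w0i : fwalk (f 0) (f i) (i - 0) by apply: (fwalk_sub wf); lia.
have wjm : fwalk (f j) (f m) (m - j) by apply: (fwalk_sub wf); lia.
have := dist_le (fwalk_cat (fwalk_cat w0i (dist_fwalk (f i) (f j))) wjm).
rewrite geo; lia.
Qed.

Lemma geodesic_interior_not_md f m i j : is_walk f m -> dist e (f 0) (f m) = m ->
  i < j < m -> ~~ maximally_distant e (f j) (f i).
Proof.
move=> wf geo /andP [lt_ij lt_jm]; apply/negP => /forallP /(_ (f j.+1)).
rewrite wf //= (dist_sym (f j)) !(dist_geodesic wf geo); lia.
Qed.

Lemma geodesic_path_not_md x (p : seq T) a b c :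
  path e x p -> size p = dist e x (last x p) ->
  c \in x :: p -> index a (x :: p) < index b (x :: p) < index c (x :: p) ->
  ~~ maximally_distant e b a.
Proof.
set s := x :: p => xp geo c_in /andP [lt_ab lt_bc].
have size_s : size s = (size p).+1 by [].
have wf : is_walk (nth x s) (size p) by move=> t lt_t; apply: (pathP x xp).
have geo_s : dist e (nth x s 0) (nth x s (size p)) = size p by rewrite -last_nth -geo.
rewrite -index_mem size_s ltnS in c_in.
have lt_bp : index b s < size p := leq_trans lt_bc c_in.
have b_in : b \in s by rewrite -index_mem size_s ltnS ltnW.
have a_in : a \in s by rewrite -index_mem size_s ltnS ltnW // (ltn_trans lt_ab lt_bp).
have /(geodesic_interior_not_md wf geo_s) : index a s < index b s < size p by rewrite lt_ab.
by rewrite !nth_index.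
Qed.

Lemma clique_SR_gen_pos C : clique (SR e) C -> gen_pos e C.
Proof.
move=> /forall_inP cliqueC.
apply/forall_inP => u uC; apply/forall_inP => v vC; apply/forall_inP => w wC.
apply/implyP => /and3P [uv vw uw]; apply/negP.
case/existsP => x /existsP [m /existsP [p /and5P [xp /eqP geo u_in v_in w_in]]].
have geo_p : size p = dist e x (last x p) by rewrite size_tuple.
set s := x :: p in u_in v_in w_in.
have between a b c : a \in C -> b \in C -> c \in s ->
    index a s < index b s -> index b s < index c s -> False.
  move=> aC bC c_in lt_ab lt_bc.
  have ba : b != a by apply: contraTneq lt_ab => ->; rewrite ltnn.
  have /negP := geodesic_path_not_md xp geo_p c_in (introT andP (conj lt_ab lt_bc)).
  by apply; move: (cliqueC b bC) => /forall_inP /(_ a aC); rewrite /SR ba /= => /andP [].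
have index_neq a b : a \in s -> b \in s -> a != b -> index a s <> index b s.
  by move=> a_in b_in /eqP ab eq_ab; apply: ab; rewrite -(nth_index x a_in) eq_ab nth_index.
have [lt_uv|lt_vu|] := ltngtP (index u s) (index v s); last exact: index_neq.
- have [lt_vw|lt_wv|] := ltngtP (index v s) (index w s); last exact: index_neq.
    exact: (between u v w).
  have [lt_uw|lt_wu|] := ltngtP (index u s) (index w s); last exact: index_neq.
  + exact: (between u w v).
  + exact: (between w u v).
- have [lt_vw|lt_wv|] := ltngtP (index v s) (index w s); last exact: index_neq.
  + have [lt_uw|lt_wu|] := ltngtP (index u s) (index w s); last exact: index_neq.
    * exact: (between v u w).
    * exact: (between v w u).
  + exact: (between w v u).
Qed.

End Connected.
End Walks.

Lemma gen_pos_le_gp (T : finType) (e : rel T) (X : {set T}) :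
  gen_pos e X -> #|X| <= gp e.
Proof. exact: (@leq_bigmax_cond _ (gen_pos e) (fun X => #|X|)). Qed.

Lemma clique_le_omega (T : finType) (r : rel T) (X : {set T}) :
  clique r X -> #|X| <= omega r.
Proof. exact: (@leq_bigmax_cond _ (clique r) (fun X => #|X|)). Qed.

Lemma omega_SR_le_gp (T : finType) (e : rel T) :
  connected_graph e -> symmetric e -> omega (SR e) <= gp e.
Proof.
by move=> econn esym; apply/bigmax_leqP => C /(clique_SR_gen_pos econn esym)/gen_pos_le_gp.
Qed.

Lemma card_preim_tag (T : finType) (k : T -> nat) (A : {set T}) :
  #|tag @^-1: A : {set {v : T & 'I_(k v)}}| = \sum_(v in A) k v.
Proof.
rewrite -sum1_card (eq_bigl (fun a => (tag a \in A) && predT (tagged a))); last first.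
  by move=> a; rewrite inE andbT.
rewrite -(sig_big_dep (fun v => v \in A) (fun _ => predT) (fun _ _ => 1)).
by apply: eq_bigr => v _; rewrite sum1_card card_ord.
Qed.

Lemma leq_sum_dominant (T : finType) (k : T -> nat) (P S : {set T}) :
  #|P| <= #|S| -> (forall i j, i \in S -> j \notin S -> k j <= k i) ->
  \sum_(i in P) k i <= \sum_(i in S) k i.
Proof.
move=> le_PS k_dom.
rewrite (big_setID S) [X in _ <= X](big_setID P) /= setIC leq_add2l.
pose c := \max_(j in P :\: S) k j.
have le_PS_c : \sum_(j in P :\: S) k j <= #|P :\: S| * c.
  by rewrite -sum_nat_const; apply: leq_sum => j j_in; apply: leq_bigmax_cond.
have le_c_SP : #|S :\: P| * c <= \sum_(i in S :\: P) k i.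
  rewrite -sum_nat_const; apply: leq_sum => i; rewrite inE => /andP [_ iS].
  by apply/bigmax_leqP => j; rewrite inE => /andP [jS _]; apply: k_dom.
have card_diff : #|P :\: S| <= #|S :\: P|.
  by have := cardsID S P; have := cardsID P S; rewrite setIC; lia.
exact: leq_trans le_PS_c (leq_trans (leq_mul card_diff (leqnn c)) le_c_SP).
Qed.

Section LexicographicProduct.
Variables (T : finType) (e : rel T) (k : T -> nat).
Hypotheses (esym : symmetric e) (eirr : irreflexive e) (econn : connected_graph e).
Hypothesis k_gt0 : forall v, 0 < k v.

Local Notation V := {v : T & 'I_(k v)}.
Local Notation H := (lexK e k).

Definition vertex0 (v : T) : V := Tagged (fun v => 'I_(k v)) (Ordinal (k_gt0 v)).

Lemma lexK_sym : symmetric H.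
Proof. by move=> a b; rewrite /lexK esym (eq_sym (tag a)) (eq_sym a). Qed.

Lemma lexK_same_tag a b : tag a = tag b -> a != b -> H a b.
Proof. by move=> ab_tag ab; rewrite /lexK ab_tag eqxx ab orbT. Qed.

Lemma fwalk_lexK_lift a b d : 0 < d -> fwalk e (tag a) (tag b) d -> fwalk H a b d.
Proof.
move=> d_gt0 [g [g0 gd wg]].
pose F i := if i == 0 then a else if i == d then b else vertex0 (g i).
have tagF i : i <= d -> tag (F i) = g i.
  by rewrite /F; case: eqP => [->|_] _; [rewrite g0 | case: eqP => [->|]].
exists F; split.
- by rewrite /F eqxx.
- by rewrite /F eqxx; case: eqP d_gt0 => // ->.
- by move=> i lt_id; rewrite /lexK !tagF ?wg //; apply: ltnW.
Qed.

Lemma fwalk_lexK_proj a b n :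
  fwalk H a b n -> exists2 m, m <= n & fwalk e (tag a) (tag b) m.
Proof.
move=> [f [<- <- wf]]; elim: n wf => [|n IHn] wf; first by exists 0 => //; apply: fwalk0.
have [|m le_mn wm] := IHn; first by move=> i lt_in; apply: wf; apply: ltnW.
case/orP: (wf n (ltnSn n)) => [e_step | /andP [/eqP <- _]].
  by exists m.+1; last by rewrite -[m.+1]addn1; apply: fwalk_cat wm (fwalk1 e_step).
by exists m => //; apply: leqW.
Qed.

Lemma lexK_connected : connected_graph H.
Proof.
move=> a b; have [ab_tag|ab_tag] := eqVneq (tag a) (tag b).
  by have [->|ab] := eqVneq a b; [apply: connect0 | apply/connect1/lexK_same_tag].
apply: (@fwalk_connect _ _ _ _ (dist e (tag a) (tag b))).
by apply: fwalk_lexK_lift; [rewrite dist_gt0 | apply: dist_fwalk].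
Qed.

Lemma dist_lexK a b : tag a != tag b -> dist H a b = dist e (tag a) (tag b).
Proof.
move=> ab_tag; apply/eqP; rewrite eqn_leq dist_le /=.
  have [m le_m wm] := fwalk_lexK_proj (dist_fwalk lexK_connected a b).
  exact: leq_trans (dist_le wm) le_m.
by apply: fwalk_lexK_lift; [rewrite dist_gt0 | apply: dist_fwalk].
Qed.

Lemma dist_lexK_same_tag a b : tag a = tag b -> dist H a b <= 1.
Proof.
move=> ab_tag; have [->|ab] := eqVneq a b; first by rewrite dist_xx.
exact/dist_edge/lexK_same_tag.
Qed.

Lemma md_lexK_same_tag a b : tag a = tag b -> a != b -> maximally_distant H a b.
Proof.
move=> ab_tag ab; apply/forallP => w; apply/implyP.
have d_gt0 : 0 < dist H a b by rewrite (dist_gt0 lexK_connected).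
case/orP=> [e_aw | /andP [/eqP aw_tag _]].
  have bw_tag : tag b != tag w by apply/eqP => bw_tag; rewrite ab_tag bw_tag eirr in e_aw.
  by rewrite dist_lexK // -ab_tag; apply: leq_trans (dist_edge e_aw) d_gt0.
by apply: leq_trans (dist_lexK_same_tag _) d_gt0; rewrite -ab_tag.
Qed.

Lemma md_lexK a b : tag a != tag b -> maximally_distant e (tag a) (tag b) ->
  maximally_distant H a b.
Proof.
move=> ab_tag /forallP md_ab; apply/forallP => w; apply/implyP.
rewrite (dist_lexK ab_tag); case/orP=> [e_aw | /andP [/eqP aw_tag _]].
  have [bw_tag|bw_tag] := eqVneq (tag b) (tag w).
    by apply: leq_trans (dist_lexK_same_tag bw_tag) _; rewrite dist_gt0.
  by rewrite dist_lexK //; apply: (implyP (md_ab (tag w))).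
by rewrite dist_lexK -aw_tag 1?eq_sym // (dist_sym econn esym).
Qed.

Lemma clique_SR_lexK_preim S : clique (SR e) S -> clique (SR H) (tag @^-1: S).
Proof.
move=> /forall_inP cliqueS; apply/forall_inP => a; rewrite inE => aS.
apply/forall_inP => b; rewrite inE => bS; apply/implyP => ab.
rewrite /SR ab /MMD /=; have [ab_tag|ab_tag] := eqVneq (tag a) (tag b).
  by rewrite !md_lexK_same_tag // eq_sym.
move: (cliqueS _ aS) => /forall_inP /(_ _ bS).
by rewrite /SR ab_tag /MMD /= => /andP [md_ab md_ba]; rewrite !md_lexK // eq_sym.
Qed.

Lemma on_common_geodesic_lexK a b c :
  tag a != tag b -> tag b != tag c -> tag a != tag c ->
  on_common_geodesic e (tag a) (tag b) (tag c) -> on_common_geodesic H a b c.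
Proof.
move=> ab bc ac /existsP [x /existsP [m /existsP [p /and5P [xp /eqP geo a_in b_in c_in]]]].
pose L t := if t == tag a then a else if t == tag b then b
            else if t == tag c then c else vertex0 t.
have tagL t : tag (L t) = t by rewrite /L; do 3!case: eqP => [->//|_].
have La : L (tag a) = a by rewrite /L eqxx.
have Lb : L (tag b) = b by rewrite /L eq_sym (negbTE ab) eqxx.
have Lc : L (tag c) = c by rewrite /L eq_sym (negbTE ac) eq_sym (negbTE bc) eqxx.
have lt_mV : m < #|{: V}|.+1.
  apply: leq_trans (ltn_ord m) _; rewrite ltnS.
  by apply: (leq_card vertex0) => v w /(congr1 tag).
apply/existsP; exists (L x); apply/existsP; exists (Ordinal lt_mV).
apply/existsP; exists (map_tuple L p); apply/and5P; split => /=.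
- by rewrite path_map; apply: sub_path xp => u v uv; rewrite /= /lexK !tagL uv.
- rewrite last_map; have [x_last|x_last] := eqVneq x (last x p).
    by rewrite -x_last !dist_xx in geo *; apply/eqP.
  by rewrite dist_lexK !tagL // -geo.
- by rewrite -La (map_f L a_in).
- by rewrite -Lb (map_f L b_in).
- by rewrite -Lc (map_f L c_in).
Qed.

Lemma gen_pos_lexK_tag X : gen_pos H X -> gen_pos e (tag @: X).
Proof.
move=> /forall_inP posX.
apply/forall_inP => _ /imsetP [a aX ->]; apply/forall_inP => _ /imsetP [b bX ->].
apply/forall_inP => _ /imsetP [c cX ->]; apply/implyP => /and3P [ab bc ac].
have neq u v : tag u != tag v -> u != v by apply: contraNneq => ->.
move: (posX a aX) => /forall_inP /(_ b bX) /forall_inP /(_ c cX).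
rewrite !neq //= => /negP not_geo; apply/negP => /(on_common_geodesic_lexK ab bc ac).
exact: not_geo.
Qed.

Lemma gp_lexK_le S : gp_set e S -> (forall i j, i \in S -> j \notin S -> k j <= k i) ->
  gp H <= \sum_(i in S) k i.
Proof.
move=> /andP [_ /eqP gpS] k_dom; apply/bigmax_leqP => X /gen_pos_lexK_tag posX.
have le_XS : #|tag @: X| <= #|S| by rewrite gpS; apply: gen_pos_le_gp.
apply: leq_trans (leq_sum_dominant le_XS k_dom).
rewrite -card_preim_tag; apply/subset_leq_card/subsetP => a aX.
by rewrite inE imset_f.
Qed.

Lemma sum_le_omega_SR_lexK S : clique (SR e) S -> \sum_(i in S) k i <= omega (SR H).
Proof. by move/clique_SR_lexK_preim; rewrite -card_preim_tag; apply: clique_le_omega. Qed.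

End LexicographicProduct.

Theorem theorem5p1 (T : finType) (e : rel T) (k : T -> nat) (S : {set T}) :
  simple_graph e -> connected_graph e ->
  (forall v, 0 < k v) ->
  gp_set e S ->
  clique (SR e) S ->
  (forall i j, i \in S -> j \notin S -> k j <= k i) ->
  gp (lexK e k) = \sum_(i in S) k i /\
  \sum_(i in S) k i = omega (SR (lexK e k)).
Proof.
move=> [esym eirr] econn k_gt0 gpS cliqueS k_dom.
have := omega_SR_le_gp (lexK_connected econn k_gt0) (lexK_sym esym).
have := gp_lexK_le econn k_gt0 gpS k_dom.
have := sum_le_omega_SR_lexK esym eirr econn k_gt0 cliqueS.
lia.
Qed.
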